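(* Let $T\ge 1$ be an integer and for integers $l\ge1$, $0\le n\le l-1$ with $l-n\le T$ put $P^l_D(n)=\frac{\prod_{i=0}^{l-n-1}(1-\frac{i}{T})}{T^{n}}$. If $l \le \lfloor T-\sqrt{T}\rfloor +1$, $n\ge 0$ and $n+1 \le l-2$, then $P^{l-1}_D(n+1) \le P^l_D(n)$. *)

From HB Require Import structures.
From mathcomp Require Import all_boot all_order all_algebra.
From mathcomp Require Import reals.
Set Implicit Arguments. Unset Strict Implicit. Unset Printing Implicit Defensive.
Import Order.TTheory GRing.Theory Num.Theory.
Local Open Scope ring_scope.

Definition PD (R : realType) (T l n : nat) : R :=
  (\prod_(i < l - n) (1 - i%:R / T%:R)) / T%:R ^+ n.

(* Both sides share the factors with [i < l - n - 2]; going from the right side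
   to the left one trades the last two factors [(1 - k/T)(1 - (k+1)/T)],
   [k = l - n - 2], for one more factor [1/T].  Writing [x = T - k - 1], that
   trade loses nothing exactly when [x (x + 1) >= T], and the bound on [l]
   gives [x >= sqrt T]. *)
From HB Require Import structures.
From mathcomp Require Import all_boot all_order all_algebra.
From mathcomp Require Import reals.
From mathcomp Require Import zify ring lra.
Set Implicit Arguments. Unset Strict Implicit. Unset Printing Implicit Defensive.
Import Order.TTheory GRing.Theory Num.Theory.
Local Open Scope ring_scope.

Lemma natr_le_floorD1 (R : archiRealDomainType) (x : R) (l : nat) :
  (0 < l)%N -> l%:Z <= Num.floor x + 1 -> (l.-1)%:R <= x.
Proof.
move=> l_gt0 hl; rewrite -[_%:R]/((l.-1)%:Z%:~R) -floor_ge_int.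
by rewrite -lerBlDr subzn // subn1 in hl.
Qed.

Lemma PD_ge0 (R : realType) (T l n : nat) :
  (l - n <= T)%N -> 0 <= PD R T l n.
Proof.
move=> hlnT; rewrite /PD divr_ge0 ?exprn_ge0 // prodr_ge0 // => i _.
have iT : (i < T)%N by apply: leq_trans hlnT.
by rewrite subr_ge0 ler_pdivrMr ?ltr0n ?(leq_trans _ iT) // mul1r ler_nat ltnW.
Qed.

Lemma PD_predl_succr (R : realType) (T l n k : nat) : (0 < T)%N ->
  (l - n = k.+2)%N ->
  PD R T l n =
  PD R T (l - 1) n.+1 * (T%:R * ((1 - k%:R / T%:R) * (1 - k.+1%:R / T%:R))).
Proof.
move=> T_gt0 hk; have hk' : ((l - 1) - n.+1 = k)%N by lia.
have T_neq0 : T%:R != 0 :> R by rewrite pnatr_eq0 -lt0n.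
rewrite /PD hk hk' !big_ord_recr /= exprS.
by field; rewrite T_neq0 expf_neq0.
Qed.

Lemma T_mul_two_factors_ge1 (R : rcfType) (T k : nat) :
  k.+1%:R <= T%:R - Num.sqrt (T%:R : R) ->
  1 <= (T%:R : R) * ((1 - k%:R / T%:R) * (1 - k.+1%:R / T%:R)).
Proof.
move=> hk; set x : R := T%:R - k.+1%:R.
have sqrtT_ge0 : 0 <= Num.sqrt (T%:R : R) by exact: sqrtr_ge0.
have sqrtT_sqr : Num.sqrt (T%:R : R) ^+ 2 = T%:R by rewrite sqr_sqrtr.
have T_gt0 : (0 : R) < T%:R.
  have : (0 : R) < k.+1%:R by rewrite ltr0n.
  lra.
have -> : T%:R * ((1 - k%:R / T%:R) * (1 - k.+1%:R / T%:R)) = x * (x + 1) / T%:R.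
  by rewrite /x -natr1; field; rewrite gt_eqF.
have x_ge_sqrtT : Num.sqrt (T%:R : R) <= x by rewrite /x; lra.
rewrite ler_pdivlMr // mul1r; nra.
Qed.

Theorem mainTheorem3 (R : realType) (T l n : nat)
  (hT : (1 <= T)%N)
  (hl : (l%:Z <= Num.floor ((T%:R : R) - Num.sqrt (T%:R : R)) + 1)%R)
  (hn : (n.+1 <= l - 2)%N) :
  PD R T (l - 1) n.+1 <= PD R T l n.
Proof.
have hk : (l - n = (l - n - 2).+2)%N by lia.
have hkT : (l - n - 2).+1%:R <= T%:R - Num.sqrt (T%:R : R).
  have l_gt0 : (0 < l)%N by lia.
  by apply: le_trans (natr_le_floorD1 l_gt0 hl); rewrite ler_nat; lia.
have kT : (l - 1 - n.+1 <= T)%N.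
  suff : (l - n - 2).+1%:R <= T%:R :> R by rewrite ler_nat; lia.
  by have := sqrtr_ge0 (T%:R : R); lra.
rewrite (PD_predl_succr R hT hk); apply: ler_peMr; first exact: PD_ge0.
exact: T_mul_two_factors_ge1.
Qed.
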